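(* Let $\mathbf{u}=(u_1,u_2)\in\mathbb{R}[x_1,x_2]_d^2$ and $p\in\Sigma[x_1,x_2]_{2d}$, and suppose $\nabla f_p(\mathbf{u})=0$. If $p\in\operatorname{im}(\mathcal{A}_{\mathbf{u}})$, where $\mathcal{A}_{\mathbf{u}}:\mathbb{R}[x_1,x_2]_d^2\to\mathbb{R}[x_1,x_2]_{2d}$, $(v_1,v_2)\mapsto u_1v_1+u_2v_2$, then $f_p(\mathbf{u})=0$.
   Context: $\mathbb{R}[x_1,x_2]_n$ denotes the space of real binary forms (homogeneous polynomials in $x_1,x_2$) of degree $n$, and $\Sigma[x_1,x_2]_{2d}\subseteq\mathbb{R}[x_1,x_2]_{2d}$ the cone of sums of squares of binary forms of degree $d$. Fix any inner product $\langle\cdot,\cdot\rangle$ on $\mathbb{R}[x_1,x_2]_{2d}$ with induced norm $\|\cdot\|$, and let $f_p(\mathbf{u})=\|u_1^2+u_2^2-p\|^2$ for $\mathbf{u}\in\mathbb{R}[x_1,x_2]_d^2$. The gradient is taken with respect to the finite-dimensional real vector space $\mathbb{R}[x_1,x_2]_d^2$; $\nabla f_p(\mathbf{u})=0$ is equivalent to $\langle u_1v_1+u_2v_2,\,u_1^2+u_2^2-p\rangle=0$ for all $(v_1,v_2)\in\mathbb{R}[x_1,x_2]_d^2$. *)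

From HB Require Import structures.
From mathcomp Require Import all_boot all_order all_algebra.
From mathcomp Require Import all_classical all_reals all_analysis.
From mathcomp Require mpoly.
Import (canonicals, coercions, hints) mpoly.
Set Implicit Arguments. Unset Strict Implicit. Unset Printing Implicit Defensive.
Import Order.TTheory GRing.Theory Num.Theory.
Local Open Scope ring_scope.

Notation bipoly R := (mpoly.mpoly 2 R).

(* [is_form n p] : p is a binary form of degree n, i.e. p \in R[x1,x2]_n
   (homogeneous of total degree n; the zero polynomial included). *)
Definition is_form (R : realType) (n : nat) (p : bipoly R) : Prop :=
  p \in mpoly.ishomog1 n mpoly.mdeg.

(* [ip] is an inner product on the real vector space R[x1,x2]_n:
   symmetric, linear in the first argument, positive definite
   (only its values on forms of degree n matter). *)
Definition is_inner_product (R : realType) (n : nat)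
    (ip : bipoly R -> bipoly R -> R) : Prop :=
  [/\ (forall p q : bipoly R, is_form n p -> is_form n q -> ip p q = ip q p),
      (forall (a : R) (p q r : bipoly R), is_form n p -> is_form n q -> is_form n r ->
          ip (a *: p + q) r = a * ip p r + ip q r)
    & (forall p : bipoly R, is_form n p -> p != 0 -> 0 < ip p p)].

Definition ipnorm (R : realType) (ip : bipoly R -> bipoly R -> R)
    (p : bipoly R) : R := Num.sqrt (ip p p).

Definition f_p (R : realType) (ip : bipoly R -> bipoly R -> R)
    (p : bipoly R) (u : bipoly R * bipoly R) : R :=
  ipnorm ip (u.1 ^+ 2 + u.2 ^+ 2 - p) ^+ 2.

(* grad f_p(u) = 0, the gradient being taken on the finite-dimensional space
   R[x1,x2]_d^2: f_p is differentiable at u along every direction (v1,v2) of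
   that space, with zero directional derivative. *)
Definition grad_f_p_zero (R : realType) (d : nat)
    (ip : bipoly R -> bipoly R -> R) (p : bipoly R)
    (u : bipoly R * bipoly R) : Prop :=
  forall v1 v2 : bipoly R, is_form d v1 -> is_form d v2 ->
    is_derive (0 : R) (1 : R)
      (fun t : R => f_p ip p (u.1 + t *: v1, u.2 + t *: v2)) 0.

Definition is_sos (R : realType) (d : nat) (p : bipoly R) : Prop :=
  exists s : seq (bipoly R),
    (forall q, q \in s -> is_form d q) /\ p = \sum_(q <- s) q ^+ 2.

Definition A_u (R : realType) (u : bipoly R * bipoly R) (v : bipoly R * bipoly R)
  : bipoly R := u.1 * v.1 + u.2 * v.2.

Definition in_im_A_u (R : realType) (d : nat) (u : bipoly R * bipoly R)
    (p : bipoly R) : Prop :=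
  exists v1 v2 : bipoly R, [/\ is_form d v1, is_form d v2 & p = A_u u (v1, v2)].

From HB Require Import structures.
From mathcomp Require Import all_boot all_order all_algebra.
From mathcomp Require Import all_classical all_reals all_analysis.
From mathcomp Require mpoly.
From mathcomp Require Import ring.
Import (canonicals, coercions, hints) mpoly.
Import Order.TTheory GRing.Theory Num.Theory.
Local Open Scope ring_scope.

(** At a critical point u of f_p, the residual r = u1^2 + u2^2 - p is
    orthogonal to the image of A_u: along u + t v the residual is
    r + 2t A_u(v) + t^2 (v1^2 + v2^2), so the derivative of its squared norm
    at t = 0 is 4 <A_u(v), r>.  If p = A_u(w), then r = A_u(u - w) lies in that
    image itself, so <r, r> = 0 and f_p(u) = 0. *)

Lemma derive1_horner0 (R : realType) (P : {poly R}) : 'D_1 (horner P) 0 = P`_1.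
Proof. by rewrite -derive1E -derivE horner_coef0 coef_deriv. Qed.

Lemma form_A_u {R : realType} {d} {u1 u2 v1 v2 : bipoly R} :
  is_form d u1 -> is_form d u2 -> is_form d v1 -> is_form d v2 ->
  is_form (2 * d) (A_u (u1, u2) (v1, v2)).
Proof. by move=> *; rewrite mul2n -addnn; apply: rpredD; apply: mpoly.dhomogM. Qed.

Section InnerProduct.
Context {R : realType} {n : nat} {ip : bipoly R -> bipoly R -> R}.
Hypothesis ip_inner : is_inner_product n ip.

Lemma ipC p q : is_form n p -> is_form n q -> ip p q = ip q p.
Proof. by case: ip_inner => ipC _ _; apply: ipC. Qed.

Lemma ipDl p q r : is_form n p -> is_form n q -> is_form n r ->
  ip (p + q) r = ip p r + ip q r.
Proof.
case: ip_inner => _ ip_lin _ p_form q_form r_form.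
by have := ip_lin 1 p q r; rewrite scale1r mul1r; apply.
Qed.

Lemma ip0l r : is_form n r -> ip 0 r = 0.
Proof.
move=> r_form; have form0 : is_form n (0 : bipoly R) by exact: rpred0.
by apply: (addrI (ip 0 r)); rewrite addr0 -ipDl ?addr0.
Qed.

Lemma ipZl a p r : is_form n p -> is_form n r -> ip (a *: p) r = a * ip p r.
Proof.
case: ip_inner => _ ip_lin _ p_form r_form.
by rewrite -[a *: p]addr0 ip_lin ?ip0l ?addr0 //; exact: rpred0.
Qed.

Lemma ipDr p q r : is_form n p -> is_form n q -> is_form n r ->
  ip r (p + q) = ip r p + ip r q.
Proof. by move=> *; rewrite !(ipC r) ?ipDl //; apply: rpredD. Qed.

Lemma ipZr a p r : is_form n p -> is_form n r -> ip r (a *: p) = a * ip r p.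
Proof. by move=> *; rewrite !(ipC r) ?ipZl //; apply: rpredZ. Qed.

Lemma ip_ge0 p : is_form n p -> 0 <= ip p p.
Proof.
case: ip_inner => _ _ ip_pos p_form.
by have [->|/(ip_pos _ p_form)/ltW//] := eqVneq p 0; rewrite ip0l //; exact: rpred0.
Qed.

Lemma sqr_ipnorm p : is_form n p -> ipnorm ip p ^+ 2 = ip p p.
Proof. by move=> p_form; rewrite sqr_sqrtr ?ip_ge0. Qed.

Lemma sqr_ipnorm_quadratic_path r a b :
  is_form n r -> is_form n a -> is_form n b ->
  (fun t : R => ipnorm ip (r + t *: a + t ^+ 2 *: b) ^+ 2) =
  horner (Poly [:: ip r r; 2 * ip a r; ip a a + 2 * ip b r; 2 * ip a b; ip b b]).
Proof.
move=> r_form a_form b_form; apply/funext => t.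
have ta_form : is_form n (t *: a) by apply: rpredZ.
have tb_form : is_form n (t ^+ 2 *: b) by apply: rpredZ.
have ra_form : is_form n (r + t *: a) by apply: rpredD.
have path_form : is_form n (r + t *: a + t ^+ 2 *: b) by apply: rpredD.
rewrite sqr_ipnorm // horner_Poly /= !ipDl // !ipZl // !ipDr // !ipZr //.
rewrite (ipC r a) // (ipC r b) // (ipC b a) //.
ring.
Qed.

Lemma quadratic_path_stationary {r a b} :
  is_form n r -> is_form n a -> is_form n b ->
  is_derive (0 : R) (1 : R)
    (fun t : R => ipnorm ip (r + t *: a + t ^+ 2 *: b) ^+ 2) 0 ->
  ip a r = 0.
Proof.
move=> r_form a_form b_form path_derive; have := derive_val (is_derive := path_derive).
rewrite sqr_ipnorm_quadratic_path // derive1_horner0 coef_Poly /= => /eqP.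
by rewrite mulf_eq0 pnatr_eq0 => /eqP.
Qed.

End InnerProduct.

Lemma sqr_path_expansion (R : comNzRingType) (A : comAlgType R) (t : R)
    (x y v w p : A) :
  (x + t *: v) ^+ 2 + (y + t *: w) ^+ 2 - p =
  (x ^+ 2 + y ^+ 2 - p) + t *: (2 *: (x * v + y * w)) + t ^+ 2 *: (v * v + w * w).
Proof.
(* The rewrites are localised because [t%:A] is itself a scaling, so an
   unrestricted [-mulr_algl] would not terminate. *)
rewrite [t ^+ 2]expr2 -[(t * t) *: _]scalerA [2 *: _]scaler_nat.
rewrite -[t *: v]mulr_algl -[t *: w]mulr_algl -[t *: (_ *+ 2)]mulr_algl.
rewrite -[t *: (v * v + w * w)]mulr_algl -[t *: (_ * _)]mulr_algl.
by move: t%:A => T; ring.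
Qed.

Lemma grad_f_p_zero_orthogonal {R : realType} {d : nat}
    {ip : bipoly R -> bipoly R -> R} {u1 u2 p v1 v2 : bipoly R} :
  is_inner_product (2 * d) ip ->
  is_form d u1 -> is_form d u2 -> is_form (2 * d) p ->
  grad_f_p_zero d ip p (u1, u2) -> is_form d v1 -> is_form d v2 ->
  ip (A_u (u1, u2) (v1, v2)) (u1 ^+ 2 + u2 ^+ 2 - p) = 0.
Proof.
move=> ip_inner u1_form u2_form p_form grad0 v1_form v2_form.
have := grad0 v1 v2 v1_form v2_form; rewrite /f_p /=.
under eq_fun do rewrite sqr_path_expansion.
have w_form := form_A_u u1_form u2_form v1_form v2_form.
have r_form : is_form (2 * d) (u1 ^+ 2 + u2 ^+ 2 - p).
  by rewrite !expr2; apply: rpredB => //; exact: form_A_u.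
move/(quadratic_path_stationary ip_inner r_form (rpredZ 2 w_form)
       (form_A_u v1_form v2_form v1_form v2_form)).
by rewrite (ipZl ip_inner) // => /eqP; rewrite mulf_eq0 pnatr_eq0 => /eqP.
Qed.

Lemma residual_A_u (R : realType) (u1 u2 w1 w2 : bipoly R) :
  u1 ^+ 2 + u2 ^+ 2 - A_u (u1, u2) (w1, w2) = A_u (u1, u2) (u1 - w1, u2 - w2).
Proof. by rewrite /A_u /=; ring. Qed.

Theorem proposition4p1 (R : realType) (d : nat)
    (ip : bipoly R -> bipoly R -> R) (u1 u2 p : bipoly R) :
  is_inner_product (2 * d) ip ->
  is_form d u1 -> is_form d u2 ->
  is_sos d p ->
  grad_f_p_zero d ip p (u1, u2) ->
  in_im_A_u d (u1, u2) p ->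
  f_p ip p (u1, u2) = 0.
Proof.
move=> ip_inner u1_form u2_form _ grad0 [w1 [w2 [w1_form w2_form p_def]]].
subst p.
have residual_self_orthogonal := grad_f_p_zero_orthogonal ip_inner
  u1_form u2_form (form_A_u u1_form u2_form w1_form w2_form) grad0
  (rpredB u1_form w1_form) (rpredB u2_form w2_form).
rewrite -residual_A_u in residual_self_orthogonal.
by rewrite /f_p /ipnorm /= residual_self_orthogonal sqrtr0 expr0n.
Qed.
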